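(* Let $T>0$ and let $\mathbf u_i(t)$ (continuously differentiable) and $p_i(t)$, $i=1,\dots,N_h$, solve the semi-discrete scheme (S1)–(S2) on $[0,T]$. Set $d^{\rm add}_{ij}=d^u_{ij}-\nu s_{ij}$. Then $$\int_0^T\sum_{i=1}^{N_h}\sum_{j\in\mathcal N_i\setminus\{i\}}\Big[\frac{d^{\rm add}_{ij}}{2}|\mathbf u_j-\mathbf u_i|^2+\frac{d^p_{ij}}{2}(p_j-p_i)^2\Big]dt=\sum_{i=1}^{N_h}m_i\eta(\mathbf u_i(0))-\sum_{i=1}^{N_h}m_i\eta(\mathbf u_i(T)).$$
   Context: Setting. Let $d\in\{2,3\}$ and let $\Omega\subset\mathbb R^d$ be a box on which periodic boundary conditions are imposed (all functions on $\Omega$ are periodic, so $\Omega$ is effectively a flat torus and integration by parts produces no boundary terms). $\mathcal T_h$ is a conforming simplicial mesh of $\Omega$ compatible with periodicity, with (periodically identified) vertices $\mathbf x_1,\dots,\mathbf x_{N_h}$; $\varphi_1,\dots,\varphi_{N_h}$ are the continuous piecewise-linear Lagrange basis functions ($\varphi_i(\mathbf x_j)=\delta_{ij}$), $V_h=\mathrm{span}\{\varphi_i\}$, $\mathbf V_h=(V_h)^d$. For $v_h\in V_h$ write $v_i=v_h(\mathbf x_i)$; similarly $\mathbf u_h=\sum_j\mathbf u_j\varphi_j$ for vector-valued functions. $\mathcal N_i$ is the set of indices $j$ (including $j=i$) for which the supports of $\varphi_i,\varphi_j$ overlap. Coefficients: $m_{ij}=\int_\Omega\varphi_i\varphi_j\,dx$,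 $m_i=\int_\Omega\varphi_i\,dx$, $\mathbf c_{ij}=\int_\Omega\varphi_i\nabla\varphi_j\,dx$, $s_{ij}=\int_\Omega\nabla\varphi_i\cdot\nabla\varphi_j\,dx$, and, for a given $\mathbf u_h=\sum_j\mathbf u_j\varphi_j$, $\tilde a_{ij}=\frac{\mathbf u_i+\mathbf u_j}{2}\cdot\mathbf c_{ij}$ and $a_{ij}=\frac12\int_\Omega[\varphi_i\,\mathbf u_h\cdot\nabla\varphi_j-\varphi_j\,\mathbf u_h\cdot\nabla\varphi_i]\,dx$. The kinetic energy is $\eta(\mathbf u)=|\mathbf u|^2/2$. Scheme. Given a viscosity $\nu\ge 0$ and symmetric matrices $D^u=(d^u_{ij})$, $D^p=(d^p_{ij})$ with zero row sums ($\sum_j d^u_{ij}=\sum_j d^p_{ij}=0$) and $d^u_{ij}=d^p_{ij}=0$ for $j\notin\mathcal N_i$ (the entries $d^u_{ij}$ may depend on the current velocity), the semi-discrete scheme is the system, for all $i,k=1,\dots,N_h$, (S1) $m_i\frac{d\mathbf u_i}{dt}=\sum_{j\in\mathcal N_i}\big[(d^u_{ij}-\tilde a_{ij}-\nu s_{ij})\mathbf u_j-\mathbf c_{ij}p_j\big]$, (S2) $0=\sum_{j\in\mathcal N_k}\big[d^p_{kj}p_j-\mathbf c_{kj}\cdot\mathbf u_j\big]$, where $\tilde a_{ij}$ is computed from the current $\mathbf u_h(t)$. *)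

From HB Require Import structures.
From mathcomp Require Import all_boot all_order all_algebra.
From mathcomp Require Import all_classical all_reals all_analysis.
Set Implicit Arguments. Unset Strict Implicit. Unset Printing Implicit Defensive.
Import Order.TTheory GRing.Theory Num.Theory.
Local Open Scope ring_scope.

Definition dotv (R : realType) (d : nat) (a b : 'rV[R]_d) : R :=
  \sum_(k < d) a 0 k * b 0 k.

Definition sqnorm (R : realType) (d : nat) (a : 'rV[R]_d) : R := dotv a a.

Definition eta_kin (R : realType) (d : nat) (a : 'rV[R]_d) : R := sqnorm a / 2.

(* Abstract interface for the periodic P1 Galerkin coefficients
   m_i = int phi_i, c_ij = int phi_i grad phi_j, s_ij = int grad phi_i . grad phi_j,
   and the stencil relation  nb i j  <->  j \in N_i  (overlapping supports). *)
Definition periodic_P1_coeffs (R : realType) (Nh d : nat)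
    (m : 'I_Nh -> R) (c : 'I_Nh -> 'I_Nh -> 'rV[R]_d)
    (s : 'I_Nh -> 'I_Nh -> R) (nb : 'I_Nh -> 'I_Nh -> bool) : Prop :=
  [/\ (forall i, 0 < m i),
      (forall i, nb i i),
      (forall i j, nb i j = nb j i),
      (forall i j, ~~ nb i j -> c i j = 0 /\ s i j = 0)
    & 
[/\ (forall i j, c i j + c j i = 0),          (* periodicity: int grad(phi_i phi_j) = 0 *)
      (forall i, \sum_j c i j = 0),             (* partition of unity *)
      (forall i j, s i j = s j i)
    & (forall i, \sum_j s i j = 0) ] ].

Definition atilde (R : realType) (Nh d : nat) (c : 'I_Nh -> 'I_Nh -> 'rV[R]_d)
    (uv : 'I_Nh -> 'rV[R]_d) (i j : 'I_Nh) : R :=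
  dotv ((2^-1) *: (uv i + uv j)) (c i j).

Definition diffusion_matrix (R : realType) (Nh : nat)
    (nb : 'I_Nh -> 'I_Nh -> bool) (D : 'I_Nh -> 'I_Nh -> R) : Prop :=
  [/\ (forall i j, D i j = D j i),
      (forall i, \sum_j D i j = 0)
    & (forall i j, ~~ nb i j -> D i j = 0)].

From HB Require Import structures.
From mathcomp Require Import all_boot all_order all_algebra.
From mathcomp Require Import all_classical all_reals all_analysis.
From mathcomp Require Import measurable_realfun ring lra.
Import Order.TTheory GRing.Theory Num.Theory numFieldNormedType.Exports.
Local Open Scope classical_set_scope.
Local Open Scope ring_scope.

(* Testing (S1) with u_i and summing over i gives the rate of change of the
   discrete kinetic energy \sum_i m_i eta(u_i).  Since c_ij = - c_ji, the
   convective part \sum_ij ã_ij u_i.u_j changes sign under i <-> j and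
   vanishes, and the pressure part \sum_ij p_j u_i.c_ij is minus the discrete
   divergence of u tested with p, which (S2) turns into
   - \sum_ij d^p_ij p_i p_j.
   For a symmetric matrix with zero row sums, \sum_ij a_ij x_i.x_j equals
   - \sum_i \sum_(j <> i) a_ij |x_j - x_i|^2 / 2, so the energy rate is minus
   the integrand, and the fundamental theorem of calculus concludes. *)

Section DotProduct.
Context {R : realType} {d : nat}.
Implicit Types a b e : 'rV[R]_d.

Lemma dotvC a b : dotv a b = dotv b a.
Proof. by rewrite /dotv; apply: eq_bigr => k _; rewrite mulrC. Qed.

Lemma dotvDl a b e : dotv (a + b) e = dotv a e + dotv b e.
Proof.
by rewrite /dotv -big_split; apply: eq_bigr => k _; rewrite mxE mulrDl.
Qed.

Lemma dotvZl k a b : dotv (k *: a) b = k * dotv a b.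
Proof.
by rewrite /dotv mulr_sumr; apply: eq_bigr => l _; rewrite mxE mulrA.
Qed.

Lemma dotvNl a b : dotv (- a) b = - dotv a b.
Proof. by rewrite -scaleN1r dotvZl mulN1r. Qed.

Lemma dotvBl a b e : dotv (a - b) e = dotv a e - dotv b e.
Proof. by rewrite dotvDl dotvNl. Qed.

Lemma dotvZr k a b : dotv b (k *: a) = k * dotv b a.
Proof. by rewrite dotvC dotvZl dotvC. Qed.

Lemma dotvNr a b : dotv a (- b) = - dotv a b.
Proof. by rewrite dotvC dotvNl dotvC. Qed.

Lemma dotvBr a b e : dotv e (a - b) = dotv e a - dotv e b.
Proof. by rewrite dotvC dotvBl !(dotvC e). Qed.

Lemma dotv0l a : dotv 0 a = 0.
Proof. by rewrite /dotv big1 // => k _; rewrite mxE mul0r. Qed.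

Lemma dotv0r a : dotv a 0 = 0.
Proof. by rewrite dotvC dotv0l. Qed.

Lemma dotv_sumr (I : finType) (P : pred I) (F : I -> 'rV[R]_d) a :
  dotv a (\sum_(i | P i) F i) = \sum_(i | P i) dotv a (F i).
Proof.
rewrite /dotv exchange_big /=; apply: eq_bigr => k _.
by rewrite summxE mulr_sumr.
Qed.

Lemma sqnormB a b : sqnorm (a - b) = sqnorm a - 2 * dotv a b + sqnorm b.
Proof. rewrite /sqnorm dotvBl !dotvBr (dotvC b a); ring. Qed.

Lemma sqnorm0 : sqnorm (0 : 'rV[R]_d) = 0.
Proof. exact: dotv0l. Qed.

End DotProduct.

Section SymmetricZeroRowSum.
Context {R : numFieldType} {I : finType} {a : I -> I -> R}.
Hypotheses (a_sym : forall i j, a i j = a j i)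
  (a_row0 : forall i, \sum_j a i j = 0).

Lemma sum_zero_row_mull (q : I -> R) : \sum_i \sum_j a i j * q i = 0.
Proof. by rewrite big1 // => i _; rewrite -mulr_suml a_row0 mul0r. Qed.

Lemma sum_zero_row_mulr (q : I -> R) : \sum_i \sum_j a i j * q j = 0.
Proof.
rewrite exchange_big /= -[RHS](sum_zero_row_mull q).
by apply: eq_bigr => i _; apply: eq_bigr => j _; rewrite a_sym.
Qed.

(* Polarization: with [q i = |x_i|^2] and [b i j = x_i . x_j] the summand is
   [a i j / 2 * |x_j - x_i|^2]. *)
Lemma sum_zero_row_polar (q : I -> R) (b : I -> I -> R) :
  \sum_i \sum_j a i j / 2 * (q j - 2 * b i j + q i) =
  - \sum_i \sum_j a i j * b i j.
Proof.
have -> : \sum_i \sum_j a i j / 2 * (q j - 2 * b i j + q i) =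
    (\sum_i \sum_j a i j * q j) / 2 - \sum_i \sum_j a i j * b i j
    + (\sum_i \sum_j a i j * q i) / 2.
  rewrite !mulr_suml -sumrB -big_split /=; apply: eq_bigr => i _.
  rewrite !mulr_suml -sumrB -big_split /=; apply: eq_bigr => j _.
  by field.
by rewrite sum_zero_row_mull sum_zero_row_mulr; ring.
Qed.

End SymmetricZeroRowSum.

Section StencilSums.
Context {R : realType} {d Nh : nat} {nb : 'I_Nh -> 'I_Nh -> bool}.

Lemma big_stencil (i : 'I_Nh) (F : 'I_Nh -> R) :
  (forall j, ~~ nb i j -> F j = 0) -> \sum_(j | nb i j) F j = \sum_j F j.
Proof.
move=> F_nb; rewrite big_mkcond /=; apply: eq_bigr => j _.
by case: (boolP (nb i j)) => // /F_nb ->.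
Qed.

Lemma big_stencil_offdiag (i : 'I_Nh) (F : 'I_Nh -> R) :
  F i = 0 -> (forall j, ~~ nb i j -> F j = 0) ->
  \sum_(j | nb i j && (j != i)) F j = \sum_j F j.
Proof.
move=> Fi F_nb; rewrite big_mkcond /=; apply: eq_bigr => j _.
case: (boolP (nb i j)) => [_|/F_nb -> //].
by case: eqP => [->|].
Qed.

Lemma diffusion_matrix_sub_scaled (k : R) {a b : 'I_Nh -> 'I_Nh -> R} :
  diffusion_matrix nb a -> diffusion_matrix nb b ->
  diffusion_matrix nb (fun i j => a i j - k * b i j).
Proof.
move=> [a_sym a_row0 a_nb] [b_sym b_row0 b_nb]; split.
- by move=> i j; rewrite a_sym b_sym.
- by move=> i; rewrite sumrB -mulr_sumr a_row0 b_row0 mulr0 subrr.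
- by move=> i j ij_nb; rewrite a_nb // b_nb // mulr0 subrr.
Qed.

Lemma diffusion_velocity_dissipation (a : 'I_Nh -> 'I_Nh -> R)
    (U : 'I_Nh -> 'rV[R]_d) : diffusion_matrix nb a ->
  \sum_i \sum_(j | nb i j && (j != i)) a i j / 2 * sqnorm (U j - U i) =
  - \sum_i \sum_j a i j * dotv (U i) (U j).
Proof.
move=> [a_sym a_row0 a_nb].
rewrite -(sum_zero_row_polar a_sym a_row0 (fun i => sqnorm (U i))).
apply: eq_bigr => i _; rewrite big_stencil_offdiag.
- by apply: eq_bigr => j _; rewrite sqnormB dotvC.
- by rewrite /= subrr sqnorm0 mulr0.
- by move=> j ij_nb; rewrite a_nb // !mul0r.
Qed.

Lemma diffusion_pressure_dissipation (a : 'I_Nh -> 'I_Nh -> R)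
    (P : 'I_Nh -> R) : diffusion_matrix nb a ->
  \sum_i \sum_(j | nb i j && (j != i)) a i j / 2 * (P j - P i) ^+ 2 =
  - \sum_i \sum_j a i j * (P i * P j).
Proof.
move=> [a_sym a_row0 a_nb].
rewrite -(sum_zero_row_polar a_sym a_row0 (fun i => P i ^+ 2)).
apply: eq_bigr => i _; rewrite big_stencil_offdiag.
- by apply: eq_bigr => j _; congr (_ * _); ring.
- by rewrite subrr expr0n mulr0.
- by move=> j ij_nb; rewrite a_nb // !mul0r.
Qed.

Section Convection.
Context {c : 'I_Nh -> 'I_Nh -> 'rV[R]_d}.
Hypothesis c_skew : forall i j, c i j + c j i = 0.

Lemma skew_coeffC i j : c j i = - c i j.
Proof. by apply/eqP; rewrite -addr_eq0 addrC c_skew. Qed.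

Lemma convection_energy_neutral (U : 'I_Nh -> 'rV[R]_d) :
  \sum_i \sum_j atilde c U i j * dotv (U i) (U j) = 0.
Proof.
set X := LHS; suff : X = - X by lra.
rewrite {1}/X exchange_big /= -sumrN; apply: eq_bigr => i _.
rewrite -sumrN; apply: eq_bigr => j _.
by rewrite /atilde skew_coeffC dotvNr addrC (dotvC (U j)) mulNr.
Qed.

Lemma pressure_work (dp : 'I_Nh -> 'I_Nh -> R) (U : 'I_Nh -> 'rV[R]_d)
    (P : 'I_Nh -> R) :
  (forall i j, ~~ nb i j -> c i j = 0) ->
  (forall i j, ~~ nb i j -> dp i j = 0) ->
  (forall k, 0 = \sum_(j | nb k j) (dp k j * P j - dotv (c k j) (U j))) ->
  \sum_i \sum_j P j * dotv (U i) (c i j) =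
  - \sum_i \sum_j dp i j * (P i * P j).
Proof.
move=> c_nb dp_nb S2.
have div_U k : \sum_j dotv (c k j) (U j) = \sum_j dp k j * P j.
  apply/eqP; rewrite eq_sym -subr_eq0 -sumrB -(big_stencil k).
    by rewrite -S2.
  by move=> j /[dup] /c_nb -> /dp_nb ->; rewrite dotv0l mul0r subrr.
rewrite exchange_big /= -sumrN; apply: eq_bigr => i _.
transitivity (- (P i * \sum_j dotv (c i j) (U j))).
  rewrite mulr_sumr -sumrN; apply: eq_bigr => j _.
  by rewrite skew_coeffC dotvNr dotvC mulrN.
rewrite div_U mulr_sumr; congr (- _).
by apply: eq_bigr => j _; rewrite mulrCA.
Qed.

Lemma discrete_energy_balance (a dp : 'I_Nh -> 'I_Nh -> R)
    (U : 'I_Nh -> 'rV[R]_d) (P : 'I_Nh -> R) :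
  (forall i j, ~~ nb i j -> c i j = 0) ->
  diffusion_matrix nb a -> diffusion_matrix nb dp ->
  (forall k, 0 = \sum_(j | nb k j) (dp k j * P j - dotv (c k j) (U j))) ->
  \sum_i \sum_(j | nb i j && (j != i))
     (a i j / 2 * sqnorm (U j - U i) + dp i j / 2 * (P j - P i) ^+ 2)
  = - \sum_i dotv (U i) (\sum_(j | nb i j)
        ((a i j - atilde c U i j) *: U j - P j *: c i j)).
Proof.
move=> c_nb a_diff dp_diff S2.
have [_ _ a_nb] := a_diff; have [_ _ dp_nb] := dp_diff.
rewrite (eq_bigr _ (fun i _ => big_split _ _ _ _ _)) big_split /=.
rewrite diffusion_velocity_dissipation // diffusion_pressure_dissipation //.
have expand i : dotv (U i) (\sum_(j | nb i j)
        ((a i j - atilde c U i j) *: U j - P j *: c i j)) =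
    \sum_j a i j * dotv (U i) (U j) - \sum_j atilde c U i j * dotv (U i) (U j)
    - \sum_j P j * dotv (U i) (c i j).
  rewrite dotv_sumr big_stencil; last first.
    move=> j ij_nb; rewrite /atilde a_nb // c_nb // dotv0r scaler0.
    by rewrite sub0r oppr0 scale0r subr0 dotv0r.
  rewrite -!sumrB; apply: eq_bigr => j _.
  by rewrite dotvBr !dotvZr; ring.
rewrite (eq_bigr _ (fun i _ => expand i)) !sumrB.
by rewrite convection_energy_neutral (pressure_work _ _ _ c_nb dp_nb S2); ring.
Qed.

End Convection.

End StencilSums.

Section KineticEnergy.
Context {R : realType} {d : nat}.

Lemma is_derive_coord {f : R -> 'rV[R]_d} {t : R} (k : 'I_d) :
  derivable f t 1 ->
  is_derive t (1 : R) (fun s => f s 0 k) (derive1 f t 0 k).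
Proof.
move=> df; have dfk := (derivable_mxP f t 1).1 df 0 k.
apply: is_derive_eq (derivableP dfk) _.
by rewrite derive1E derive_mx // mxE.
Qed.

Lemma is_derive_sqnorm {f : R -> 'rV[R]_d} {t : R} : derivable f t 1 ->
  is_derive t (1 : R) (fun s => sqnorm (f s)) (2 * dotv (f t) (derive1 f t)).
Proof.
move=> df.
have dfk k : is_derive t (1 : R) ((fun s => f s 0 k) * (fun s => f s 0 k))
    (2 * (f t 0 k * derive1 f t 0 k)).
  have dk := is_derive_coord k df.
  by apply: is_derive_eq (is_deriveM dk dk) _; rewrite /GRing.scale /=; ring.
have := is_derive_sum dfk; rewrite fct_sumE => dsum.
by apply: is_derive_eq dsum _; rewrite /dotv mulr_sumr.
Qed.

Lemma is_derive_kinetic_energy {Nh : nat} (m : 'I_Nh -> R)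
    (u : 'I_Nh -> R -> 'rV[R]_d) t : (forall i, derivable (u i) t 1) ->
  is_derive t (1 : R) (fun s => \sum_i m i * eta_kin (u i s))
    (\sum_i m i * dotv (u i t) (derive1 (u i) t)).
Proof.
move=> du.
have dui i : is_derive t (1 : R) (fun s => m i * eta_kin (u i s))
    (m i * dotv (u i t) (derive1 (u i) t)).
  have -> : (fun s => m i * eta_kin (u i s)) =
      (m i / 2) \*: (fun s => sqnorm (u i s)).
    by apply/funext => s; rewrite /eta_kin /= mulrA mulrAC.
  apply: is_derive_eq (is_deriveZ _ (is_derive_sqnorm (du i))) _.
  by rewrite /GRing.scale /=; field.
by have := is_derive_sum dui; rewrite fct_sumE.
Qed.

Lemma cvg_dotv (T : Type) (F : set_system T) {FF : Filter F}
    (v w : T -> 'rV[R]_d) v0 w0 : v @ F --> v0 -> w @ F --> w0 ->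
  (fun x => dotv (v x) (w x)) @ F --> dotv v0 w0.
Proof.
move=> vv0 ww0; rewrite /dotv.
apply: (@cvg_big _ _ +%R 0 xpredT add_continuous) => // k _.
by apply: cvgM; apply: continuous_cvg (@coord_continuous R 1 d 0 k _) _.
Qed.

Lemma continuous_within_sum_dotv (A : set R) {Nh : nat} (k : 'I_Nh -> R)
    {v w : 'I_Nh -> R -> 'rV[R]_d} :
  (forall i, {within A, continuous (v i)}) ->
  (forall i, {within A, continuous (w i)}) ->
  {within A, continuous (fun t => \sum_i k i * dotv (v i t) (w i t))}.
Proof.
move=> v_cont w_cont t.
apply: (@cvg_big _ _ +%R 0 xpredT add_continuous) => // i _.
by apply: cvgMr; apply: cvg_dotv; [apply: v_cont | apply: w_cont].
Qed.

Lemma continuous_within_kinetic_energy (A : set R) {Nh : nat}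
    (m : 'I_Nh -> R) (u : 'I_Nh -> R -> 'rV[R]_d) :
  (forall i, {within A, continuous (u i)}) ->
  {within A, continuous (fun t => \sum_i m i * eta_kin (u i t))}.
Proof.
move=> u_cont.
have -> : (fun t => \sum_i m i * eta_kin (u i t)) =
    (fun t => \sum_i m i / 2 * dotv (u i t) (u i t)).
  apply/funext => t; apply: eq_bigr => i _.
  by rewrite /eta_kin /sqnorm mulrA mulrAC.
exact: continuous_within_sum_dotv.
Qed.

End KineticEnergy.

Lemma eq_integral_itv_cc {R : realType} {a b : R} {f g : R -> R} : a < b ->
  {in `]a, b[, f =1 g} -> measurable_fun `[a, b] g ->
  (\int[lebesgue_measure]_(x in `[a, b]) (f x)%:E =
   \int[lebesgue_measure]_(x in `[a, b]) (g x)%:E)%E.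
Proof.
move=> ab fg g_cc.
have g_oo : measurable_fun `]a, b[ g.
  by apply: measurable_funS g_cc => //; exact: subset_itv_oo_cc.
have f_oo : measurable_fun `]a, b[ f.
  by apply: eq_measurable_fun g_oo => t /set_mem tab; rewrite fg.
have ab' : (BRight a <= BLeft b)%O by rewrite bnd_simp.
have oc (h : R -> R) : measurable_fun `]a, b[ h -> measurable_fun `]a, b] h.
  move=> h_oo; rewrite -(setUitv1 true ab'); apply/measurable_funU => //.
  by split; [exact: h_oo | exact: measurable_fun_set1].
rewrite -!integral_itv_obnd_cbnd -?integral_itv_bndo_bndc.
- by apply: eq_integral => t /set_mem tab; rewrite fg.
all: apply/measurable_EFinP => //; exact: oc.
Qed.

Theorem lemma1 (R : realType) (d Nh : nat) (hd : (d == 2%N) || (d == 3%N))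
  (m : 'I_Nh -> R) (c : 'I_Nh -> 'I_Nh -> 'rV[R]_d)
  (s : 'I_Nh -> 'I_Nh -> R) (nb : 'I_Nh -> 'I_Nh -> bool)
  (hFE : periodic_P1_coeffs m c s nb)
  (nu : R) (hnu : 0 <= nu)
  (du : R -> 'I_Nh -> 'I_Nh -> R) (dp : 'I_Nh -> 'I_Nh -> R)
  (T : R) (hT : 0 < T)
  (u : 'I_Nh -> R -> 'rV[R]_d) (p : 'I_Nh -> R -> R)
  (hdu : forall t : R, t \in `[0, T] -> diffusion_matrix nb (du t))
  (hdp : diffusion_matrix nb dp)
  (* u_i continuously differentiable on [0,T] *)
  (hucont : forall i, {within [set` `[0, T]%R], continuous (u i)})
  (huder : forall i (t : R), t \in `]0, T[ -> derivable (u i) t 1)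
  (hudc : forall i, exists g : R -> 'rV[R]_d,
            {within [set` `[0, T]%R], continuous g} /\
            forall t : R, t \in `]0, T[ -> derive1 (u i) t = g t)
  (* (S1) *)
  (hS1 : forall i (t : R), t \in `]0, T[ ->
     m i *: derive1 (u i) t =
       \sum_(j | nb i j)
          ((du t i j - atilde c (fun k => u k t) i j - nu * s i j) *: u j t
           - p j t *: c i j))
  (* (S2) *)
  (hS2 : forall k (t : R), t \in `]0, T[ ->
     0 = \sum_(j | nb k j) (dp k j * p j t - dotv (c k j) (u j t))) :
  (\int[lebesgue_measure]_(t in [set` `[0%R, T]%R])
     (\sum_i \sum_(j | nb i j && (j != i))
        ((du t i j - nu * s i j) / 2 * sqnorm (u j t - u i t)
         + dp i j / 2 * (p j t - p i t) ^+ 2))%:E)%E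
  = (\sum_i m i * eta_kin (u i 0) - \sum_i m i * eta_kin (u i T))%:E.
Proof.
case: hFE => _ _ _ c_s_nb [c_skew _ s_sym s_row0].
have c_nb i j : ~~ nb i j -> c i j = 0 by move=> /c_s_nb[].
have s_diff : diffusion_matrix nb s by split => // i j /c_s_nb[].
have [u' u'P] := choice hudc.
pose E t := \sum_i m i * eta_kin (u i t).
pose dE t := \sum_i m i * dotv (u i t) (u' i t).
have E_deriv t : t \in `]0, T[ -> is_derive t (1 : R) (- E) (- dE t).
  move=> tT; apply: is_deriveN.
  have := is_derive_kinetic_energy m u t (fun i => huder i t tT).
  by under eq_bigr do rewrite ((u'P _).2 _ tT).
have E_cont : {within `[0, T], continuous (- E)}.
  by move=> t; apply: cvgN; apply: continuous_within_kinetic_energy.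
have dE_cont : {within `[0, T], continuous (fun t => - dE t)}.
  move=> t; apply: cvgN; apply: continuous_within_sum_dotv => // i.
  exact: (u'P i).1.
have balance : {in `]0, T[, forall t,
    \sum_i \sum_(j | nb i j && (j != i))
      ((du t i j - nu * s i j) / 2 * sqnorm (u j t - u i t)
       + dp i j / 2 * (p j t - p i t) ^+ 2) = - dE t}.
  move=> t tT.
  have a_diff :=
    diffusion_matrix_sub_scaled nu (hdu t (subset_itv_oo_cc tT)) s_diff.
  have S2_t k := hS2 k t tT.
  rewrite (discrete_energy_balance c_skew _ _ _ _ c_nb a_diff hdp S2_t).
  congr (- _); apply: eq_bigr => i _.
  rewrite -((u'P i).2 t tT) -dotvZr hS1 //; congr dotv; apply: eq_bigr => j _.
  by congr (_ *: _ - _); ring.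
have [_ E0 ET] := (continuous_within_itvP _ hT).1 E_cont.
rewrite (eq_integral_itv_cc hT balance); last first.
  exact: subspace_continuous_measurable_fun dE_cont.
rewrite (@continuous_FTC2 _ _ (- E) _ _ hT dE_cont); last first.
- by move=> t /E_deriv dE_t; rewrite derive1E derive_val.
- by split => // t /E_deriv dE_t; exact: ex_derive.
by rewrite /E /= -EFinB opprK addrC.
Qed.
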